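(* For every $1\le k\le 22$ and every $n\ge3$, the Lie algebra $\mathfrak a_k(n)$ has trivial center.
   Context: Pauli matrices $I,X,Y,Z$; for two-qubit strings $AB$, $A_jB_{j+1}$ denotes the length-$n$ Pauli string with $A$ at position $j$, $B$ at position $j+1$, $I$ elsewhere. For a set $S$ of Pauli strings, $\mathrm{Lie}\langle S\rangle$ is the smallest real Lie subalgebra of $\mathfrak u(2^n)$ containing $\{iP:P\in S\}$. For a set $G$ of two-qubit strings, $G(n)=\mathrm{Lie}\langle A_jB_{j+1}: AB\in G, 1\le j\le n-1\rangle$. Generating sets: $\mathfrak a_1=\{XY\}$, $\mathfrak a_2=\{XY,YX\}$, $\mathfrak a_3=\{XX,YZ\}$, $\mathfrak a_4=\{XX,YY\}$, $\mathfrak a_5=\{XY,YZ\}$, $\mathfrak a_6=\{XX,YZ,ZY\}$, $\mathfrak a_7=\{XX,YY,ZZ\}$, $\mathfrak a_8=\{XX,XZ\}$, $\mathfrak a_9=\{XY,XZ\}$, $\mathfrak a_{10}=\{XY,YZ,ZX\}$, $\mathfrak a_{11}=\{XY,YX,YZ\}$, $\mathfrak a_{12}=\{XX,XY,YZ\}$, $\mathfrak a_{13}=\{XX,YY,YZ\}$, $\mathfrak a_{14}=\{XX,YY,XY\}$, $\mathfrak a_{15}=\{XX,XY,XZ\}$, $\mathfrak a_{16}=\{XY,YX,YZ,ZY\}$, $\mathfrak a_{17}=\{XX,XY,ZX\}$, $\mathfrak a_{18}=\{XX,XZ,YY,ZY\}$, $\mathfrak a_{19}=\{XX,XY,ZX,YZ\}$,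 $\mathfrak a_{20}=\{XX,YY,ZZ,ZY\}$, $\mathfrak a_{21}=\{XX,YY,XY,ZX\}$, $\mathfrak a_{22}=\{XX,XY,XZ,YX\}$. *)

From HB Require Import structures.
From mathcomp Require Import all_boot all_order all_algebra.
From mathcomp Require Import reals.
From mathcomp Require Import complex.

Set Implicit Arguments.
Unset Strict Implicit.
Unset Printing Implicit Defensive.

Import Order.TTheory GRing.Theory Num.Theory.
Local Open Scope ring_scope.
Local Open Scope complex_scope.

Inductive pauli := PI | PX | PY | PZ.

Section Pauli.
Variable R : realType.
Local Notation C := R[i].

Definition pauli_entry (p : pauli) (a b : bool) : C :=
  match p, a, b with
  | PI, false, false => 1 | PI, true, true => 1
  | PX, false, true => 1 | PX, true, false => 1
  | PY, false, true => - 'i | PY, true, false => 'i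
  | PZ, false, false => 1 | PZ, true, true => -1
  | _, _, _ => 0
  end.

(* the k-th qubit of a computational-basis index m < 2^n (position k,
   0-indexed, corresponds to bit n-1-k, i.e. the most significant bit is
   qubit 0); Kronecker product convention P_0 (x) P_1 (x) ... (x) P_{n-1} *)
Definition qbit (n k m : nat) : bool := odd (m %/ 2 ^ (n.-1 - k)).

Definition pauli_string (n : nat) (s : nat -> pauli) : 'M[C]_(2 ^ n) :=
  \matrix_(i, j) \prod_(k < n) pauli_entry (s k) (qbit n k i) (qbit n k j).

Definition two_local (A B : pauli) (j : nat) : nat -> pauli :=
  fun k => if k == j then A else if k == j.+1 then B else PI.

(* smallest real Lie subalgebra of u(2^n) containing {i P : P in S} *)
Inductive lie_closure (n : nat) (S : 'M[C]_(2 ^ n) -> Prop) :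
    'M[C]_(2 ^ n) -> Prop :=
  | lc_gen P : S P -> lie_closure S ('i *: P)
  | lc_add A B : lie_closure S A -> lie_closure S B -> lie_closure S (A + B)
  | lc_scale (r : R) A : lie_closure S A -> lie_closure S (r%:C *: A)
  | lc_bracket A B : lie_closure S A -> lie_closure S B ->
      lie_closure S (A *m B - B *m A).

(* G(n) for a set G of two-qubit strings: positions 1 <= j <= n-1
   (1-indexed) are 0 <= j < n-1 (0-indexed) *)
Definition G_lie (G : seq (pauli * pauli)) (n : nat) : 'M[C]_(2 ^ n) -> Prop :=
  lie_closure (fun M => exists2 t, (t < size G)%N &
    exists2 j, (j < n.-1)%N &
      M = pauli_string n (two_local (nth (PI, PI) G t).1 (nth (PI, PI) G t).2 j)).

End Pauli.

Definition gen_set (k : nat) : seq (pauli * pauli) :=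
  match k with
  | 1 => [:: (PX,PY)]
  | 2 => [:: (PX,PY); (PY,PX)]
  | 3 => [:: (PX,PX); (PY,PZ)]
  | 4 => [:: (PX,PX); (PY,PY)]
  | 5 => [:: (PX,PY); (PY,PZ)]
  | 6 => [:: (PX,PX); (PY,PZ); (PZ,PY)]
  | 7 => [:: (PX,PX); (PY,PY); (PZ,PZ)]
  | 8 => [:: (PX,PX); (PX,PZ)]
  | 9 => [:: (PX,PY); (PX,PZ)]
  | 10 => [:: (PX,PY); (PY,PZ); (PZ,PX)]
  | 11 => [:: (PX,PY); (PY,PX); (PY,PZ)]
  | 12 => [:: (PX,PX); (PX,PY); (PY,PZ)]
  | 13 => [:: (PX,PX); (PY,PY); (PY,PZ)]
  | 14 => [:: (PX,PX); (PY,PY); (PX,PY)]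
  | 15 => [:: (PX,PX); (PX,PY); (PX,PZ)]
  | 16 => [:: (PX,PY); (PY,PX); (PY,PZ); (PZ,PY)]
  | 17 => [:: (PX,PX); (PX,PY); (PZ,PX)]
  | 18 => [:: (PX,PX); (PX,PZ); (PY,PY); (PZ,PY)]
  | 19 => [:: (PX,PX); (PX,PY); (PZ,PX); (PY,PZ)]
  | 20 => [:: (PX,PX); (PY,PY); (PZ,PZ); (PZ,PY)]
  | 21 => [:: (PX,PX); (PY,PY); (PX,PY); (PZ,PX)]
  | 22 => [:: (PX,PX); (PX,PY); (PX,PZ); (PY,PX)]
  | _ => [::]
  end.

Definition a_lie (R : realType) (k n : nat) := @G_lie R (gen_set k) n.
Arguments a_lie R k n : clear implicits.

From HB Require Import structures.
From mathcomp Require Import all_boot all_order all_algebra.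
From mathcomp Require Import reals complex.
From mathcomp Require Import ring zify.

Set Implicit Arguments.
Unset Strict Implicit.
Unset Printing Implicit Defensive.

Import GRing.Theory Num.Theory.
Local Open Scope ring_scope.
Local Open Scope complex_scope.

(* For a Lie algebra L of skew-Hermitian matrices the trace form
   (A, B) |-> tr(A B) is negative definite, and a central A is orthogonal to
   every bracket, since tr(A [X, Y]) = tr([A, X] Y) = 0.  Hence the centre is
   trivial as soon as every generator is a multiple of a bracket of elements of
   L.  For a_k(n) this is a finite check: the bracket of two anticommuting
   Pauli strings is a nonzero multiple of i times their product, and every
   generator A_j B_{j+1} is the product of two anticommuting strings supported
   on a window of three consecutive qubits (which exists because n >= 3), each
   of them a generator or a product of two anticommuting generators. *)

Section LieClosure.
Variable R : realType.
Local Notation C := R[i].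

Definition hermitian m (M : 'M[C]_m) := forall i j, (M j i)^*%C = M i j.
Definition skew_hermitian m (M : 'M[C]_m) := forall i j, (M j i)^*%C = - M i j.

Lemma skew_hermitian_mulmx_conj m (X Y : 'M[C]_m) :
  skew_hermitian X -> skew_hermitian Y ->
  forall i j, ((X *m Y) j i)^*%C = (Y *m X) i j.
Proof.
move=> hX hY i j; rewrite !mxE rmorph_sum; apply: eq_bigr => l _.
by rewrite rmorphM /= hX hY mulrNN mulrC.
Qed.

Lemma skew_hermitian_trace_sqr_eq0 m (A : 'M[C]_m) :
  skew_hermitian A -> \tr (A *m A) = 0 -> A = 0.
Proof.
move=> hA trAA0; apply/matrixP => i j; rewrite mxE.
have trAA : \tr (A *m A) = - \sum_i \sum_j A i j * (A i j)^*%C.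
  rewrite /mxtrace -sumrN; apply: eq_bigr => i' _; rewrite mxE -sumrN.
  by apply: eq_bigr => j' _; rewrite hA mulrN opprK.
move: trAA0; rewrite trAA => /eqP; rewrite oppr_eq0 => /eqP sum0.
have row0 := psumr_eq0P (fun i _ => sumr_ge0 _ (fun j _ => mulcJ_ge0 (A i j)))
  sum0 (i := i) isT.
have := psumr_eq0P (fun j _ => mulcJ_ge0 (A i j)) row0 (i := j) isT.
by move/eqP; rewrite mulf_eq0 conjc_eq0 orbb => /eqP.
Qed.

Lemma mxtrace_mul_bracket_central m (A X Y : 'M[C]_m) :
  A *m X = X *m A -> \tr (A *m (X *m Y - Y *m X)) = 0.
Proof.
move=> hAX; rewrite mulmxBr raddfB /=.
have -> : \tr (A *m (Y *m X)) = \tr (A *m (X *m Y)).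
  by rewrite mulmxA mxtrace_mulC [X *m (A *m Y)]mulmxA -hAX -mulmxA.
by rewrite subrr.
Qed.

Variables (n : nat) (S : 'M[C]_(2 ^ n) -> Prop).
Local Notation L := (lie_closure S).

Lemma lie_closure_skew_hermitian :
  (forall P, S P -> hermitian P) -> forall M, L M -> skew_hermitian M.
Proof.
move=> hS M; elim => {M} [P /hS hP|X Y _ hX _ hY|r X _ hX|X Y _ hX _ hY] i j.
- rewrite !mxE rmorphM /= hP -mulNr; congr (_ * _).
  by apply/eqP; rewrite eq_complex /= oppr0 !eqxx.
- by rewrite !mxE rmorphD /= hX hY opprD.
- rewrite !mxE rmorphM /= hX mulrN; congr (- (_ * _)).
  by apply/eqP; rewrite eq_complex /= oppr0 !eqxx.
- have := skew_hermitian_mulmx_conj hX hY i j.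
  have := skew_hermitian_mulmx_conj hY hX i j.
  by rewrite !mxE rmorphB /= => -> ->; rewrite opprB.
Qed.

Definition lie_bracket_multiple (M : 'M[C]_(2 ^ n)) :=
  exists2 r : R, r != 0 &
    exists X Y, [/\ L X, L Y & r%:C *: M = X *m Y - Y *m X].

Lemma lie_closure_trace_central (A : 'M[C]_(2 ^ n)) :
  (forall B, L B -> A *m B = B *m A) ->
  (forall P, S P -> lie_bracket_multiple ('i *: P)) ->
  forall M, L M -> \tr (A *m M) = 0.
Proof.
move=> cA hS M; elim => {M} [P /hS [r r0 [X [Y [LX _ eqXY]]]]|X Y _ hX _ hY|
  r X _ hX|X Y LX _ _ _].
- have := mxtrace_mul_bracket_central Y (cA X LX).
  rewrite -eqXY -scalemxAr mxtraceZ => /eqP; rewrite mulf_eq0 fmorph_eq0.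
  by rewrite (negbTE r0) => /eqP.
- by rewrite mulmxDr raddfD /= hX hY addr0.
- by rewrite -scalemxAr mxtraceZ hX mulr0.
- exact/mxtrace_mul_bracket_central/cA.
Qed.

Theorem lie_closure_centre_trivial (A : 'M[C]_(2 ^ n)) :
  (forall P, S P -> hermitian P) ->
  (forall P, S P -> lie_bracket_multiple ('i *: P)) ->
  L A -> (forall B, L B -> A *m B = B *m A) -> A = 0.
Proof.
move=> hermS derS LA cA.
apply: skew_hermitian_trace_sqr_eq0; first exact: lie_closure_skew_hermitian hermS _ LA.
exact: lie_closure_trace_central cA derS _ LA.
Qed.

End LieClosure.

Definition pauli_eqb (p q : pauli) :=
  match p, q with
  | PI, PI | PX, PX | PY, PY | PZ, PZ => true
  | _, _ => false
  end.

Lemma pauli_eqP : Equality.axiom pauli_eqb.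
Proof. by case; case; constructor. Qed.

HB.instance Definition _ := hasDecEq.Build pauli pauli_eqP.

(* [pauli_mul p q] and [pauli_phase p q] encode p q = i ^ (pauli_phase p q) (pauli_mul p q). *)
Definition pauli_mul (p q : pauli) : pauli :=
  match p, q with
  | PI, q => q | p, PI => p
  | PX, PX | PY, PY | PZ, PZ => PI
  | PX, PY | PY, PX => PZ
  | PY, PZ | PZ, PY => PX
  | PZ, PX | PX, PZ => PY
  end.

Definition pauli_phase (p q : pauli) : nat :=
  match p, q with
  | PX, PY | PY, PZ | PZ, PX => 1
  | PY, PX | PZ, PY | PX, PZ => 3
  | _, _ => 0
  end.

Lemma pauli_mulC : commutative pauli_mul.
Proof. by case; case. Qed.

Lemma eq_of_bits n l1 l2 : (l1 < 2 ^ n)%N -> (l2 < 2 ^ n)%N ->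
  (forall m, (m < n)%N -> odd (l1 %/ 2 ^ m) = odd (l2 %/ 2 ^ m)) -> l1 = l2.
Proof.
elim: n l1 l2 => [|n IH] l1 l2.
  by rewrite expn0 !ltnS !leqn0 => /eqP-> /eqP->.
move=> lt1 lt2 eq_bits; have := eq_bits 0%N (ltn0Sn n); rewrite !expn0 !divn1.
move=> eq_odd; rewrite -[l1]odd_double_half -[l2]odd_double_half eq_odd.
congr (_ + _.*2); apply: IH; rewrite -?divn2 ?ltn_divLR -?expnSr //.
by move=> m lt_mn; have := eq_bits m.+1 lt_mn; rewrite expnS !divnMA !divn2.
Qed.

Definition qbits n (l : 'I_(2 ^ n)) : {ffun 'I_n -> bool} := [ffun k : 'I_n => qbit n k l].

Lemma qbits_bij n : bijective (@qbits n).
Proof.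
apply: inj_card_bij; last by rewrite card_ffun card_bool !card_ord.
move=> l1 l2 /ffunP eq_q; apply/val_inj/eq_of_bits => //= m lt_mn.
have lt_k : (n.-1 - m < n)%N by lia.
have := eq_q (Ordinal lt_k); rewrite !ffunE /qbit /=.
by have -> : (n.-1 - (n.-1 - m) = m)%N by lia.
Qed.

Section PauliStrings.
Variable R : realType.
Local Notation C := R[i].

Local Notation iP n s := ('i *: pauli_string R n s).

Lemma mulCii : 'i * 'i = -1 :> C.
Proof. by rewrite -expr2 sqrCi. Qed.

Lemma pauli_entry_mul p q a c :
  pauli_entry R p a false * pauli_entry R q false c
  + pauli_entry R p a true * pauli_entry R q true c
  = 'i ^+ pauli_phase p q * pauli_entry R (pauli_mul p q) a c.
Proof.
case: p; case: q; case: a; case: c;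
  rewrite /= ?expr0 ?expr1 ?mul0r ?mulr0 ?mul1r ?mulr1 ?add0r ?addr0 //.
all: rewrite ?exprS ?expr0 ?mulr1 ?mulNr ?mulrN ?mulCii ?opprK ?mulN1r ?mulrN1 //.
all: try (rewrite mulNr mulCii ?opprK //).
all: rewrite ?complexiE; ring.
Qed.

Lemma pauli_phase_swap p q :
  'i ^+ pauli_phase q p = (-1) ^+ pauli_phase p q * 'i ^+ pauli_phase p q :> C.
Proof.
case: p; case: q; rewrite /= ?expr0 ?mulr1 // ?expr1 ?mulN1r //.
all: rewrite !exprS expr0 !mulr1 ?mulCii ?mulN1r ?mulrN1 ?opprK ?mulrN ?mulNr ?mulCii ?opprK //.
all: by rewrite mul1r ?complexiE.
Qed.

Lemma sum_prod_qbit n (F : 'I_n -> bool -> C) :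
  \sum_(l < 2 ^ n) \prod_(k < n) F k (qbit n k l) = \prod_(k < n) \sum_(b : bool) F k b.
Proof.
rewrite bigA_distr_bigA /= (reindex (@qbits n)) /=; last exact/onW_bij/qbits_bij.
by apply: eq_bigr => l _; apply: eq_bigr => k _; rewrite ffunE.
Qed.

Lemma eq_pauli_string n (s t : nat -> pauli) :
  (forall k, (k < n)%N -> s k = t k) -> pauli_string R n s = pauli_string R n t.
Proof.
move=> eq_st; apply/matrixP => a c; rewrite !mxE.
by apply: eq_bigr => k _; rewrite eq_st.
Qed.

Lemma pauli_string_hermitian n s : hermitian (pauli_string R n s).
Proof.
move=> i j; rewrite !mxE rmorph_prod; apply: eq_bigr => k _.
by case: (s k); case: (qbit n k i); case: (qbit n k j);
  rewrite /= ?rmorph0 ?rmorph1 ?rmorphN ?rmorphN1 //;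
  apply/eqP; rewrite eq_complex /= ?oppr0 ?opprK ?eqxx.
Qed.

Lemma pauli_string_mul n s t :
  pauli_string R n s *m pauli_string R n t =
  'i ^+ (\sum_(k < n) pauli_phase (s k) (t k)) *:
    pauli_string R n (fun k => pauli_mul (s k) (t k)).
Proof.
apply/matrixP => a c; rewrite !mxE.
under eq_bigr => l _ do rewrite !mxE -big_split /=.
rewrite (sum_prod_qbit
  (fun k b => pauli_entry R (s k) (qbit n k a) b * pauli_entry R (t k) b (qbit n k c))).
rewrite -prodrXr -big_split /=.
by apply: eq_bigr => k _; rewrite big_bool /= addrC pauli_entry_mul.
Qed.

(* Anticommuting strings are those with an odd total phase exponent. *)
Lemma pauli_string_bracket n (s t : nat -> pauli)
    (e := \sum_(k < n) pauli_phase (s k) (t k)) : odd e ->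
  iP n s *m iP n t - iP n t *m iP n s =
  ((-2) * (-1) ^+ e./2)%:C *: iP n (fun k => pauli_mul (s k) (t k)).
Proof.
move=> odd_e; rewrite -!scalemxAl -!scalemxAr !pauli_string_mul.
rewrite (@eq_pauli_string n (fun k => pauli_mul (t k) (s k))
  (fun k => pauli_mul (s k) (t k))); last by move=> k _; rewrite pauli_mulC.
have -> : 'i ^+ (\sum_(k < n) pauli_phase (t k) (s k)) = (-1) ^+ e * 'i ^+ e :> C.
  by rewrite -!prodrXr -big_split; apply: eq_bigr => k _; rewrite pauli_phase_swap.
rewrite -signr_odd odd_e mulN1r.
rewrite !scalerA -scalerBl; congr (_ *: _).
have -> : 'i ^+ e = 'i * (-1) ^+ e./2 :> C.
  by rewrite -{1}[e]odd_double_half odd_e -mul2n exprD exprM sqrCi expr1.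
rewrite rmorphM rmorphN rmorphXn rmorphN1 rmorph_nat mulCii; ring.
Qed.

Section Closure.
Variables (n : nat) (S : 'M[C]_(2 ^ n) -> Prop) (s t : nat -> pauli).
Hypotheses (Ls : lie_closure S (iP n s)) (Lt : lie_closure S (iP n t)).
Hypothesis anticomm : odd (\sum_(k < n) pauli_phase (s k) (t k)).

Lemma pauli_mul_bracket_multiple :
  lie_bracket_multiple S (iP n (fun k => pauli_mul (s k) (t k))).
Proof.
exists ((-2) * (-1) ^+ (\sum_(k < n) pauli_phase (s k) (t k))./2).
  by rewrite mulf_neq0 ?signr_eq0 // oppr_eq0 pnatr_eq0.
by exists (iP n s), (iP n t); rewrite pauli_string_bracket.
Qed.

Lemma lie_closure_pauli_mul : lie_closure S (iP n (fun k => pauli_mul (s k) (t k))).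
Proof.
have [r r0 [X [Y [LX LY eqXY]]]] := pauli_mul_bracket_multiple.
have := lc_scale r^-1 (lc_bracket LX LY).
by rewrite -eqXY scalerA -rmorphM mulVf // scale1r.
Qed.

End Closure.
End PauliStrings.

Definition word := (pauli * pauli * pauli)%type.

Definition word_at (w : word) (o k : nat) : pauli :=
  let: (a, b, c) := w in
  if k == o then a else if k == o.+1 then b else if k == o.+2 then c else PI.

Definition word_mul (u v : word) : word :=
  let: (a, b, c) := u in let: (a', b', c') := v in
  (pauli_mul a a', pauli_mul b b', pauli_mul c c').

Definition word_phase (u v : word) : nat :=
  let: (a, b, c) := u in let: (a', b', c') := v in
  (pauli_phase a a' + pauli_phase b b' + pauli_phase c c')%N.

Definition anticommuting_products (W : seq word) : seq word :=
  [seq word_mul uv.1 uv.2 | uv <- [seq (u, v) | u <- W, v <- W]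
     & odd (word_phase uv.1 uv.2)].

Lemma mem_anticommuting_products W w : w \in anticommuting_products W ->
  exists u v, [/\ u \in W, v \in W, odd (word_phase u v) & w = word_mul u v].
Proof.
case/mapP => -[u v]; rewrite mem_filter => /andP[odd_uv].
case/allpairsP => -[u' v'] /= [Wu Wv [eu ev]] ->; subst u' v'.
by exists u, v.
Qed.

Lemma word_at_mul u v o k :
  pauli_mul (word_at u o k) (word_at v o k) = word_at (word_mul u v) o k.
Proof.
case: u => [[a b] c]; case: v => [[a' b'] c']; rewrite /word_at /=.
by case: (k == o); case: (k == o.+1); case: (k == o.+2).
Qed.

Lemma big_ord_window n o (F : nat -> nat) : (o.+2 < n)%N ->
  (forall k, k != o -> k != o.+1 -> k != o.+2 -> F k = 0%N) ->
  (\sum_(k < n) F k = F o + F o.+1 + F o.+2)%N.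
Proof.
move=> lt_on F0; rewrite -(big_mkord xpredT F) (@big_cat_nat _ _ _ o) //=; last by lia.
rewrite big_nat big1 ?add0n; last by move=> k /andP[_ ?]; apply: F0; apply/eqP; lia.
rewrite 3?big_ltn; try lia.
rewrite big_nat big1 ?addn0 ?addnA //.
by move=> k /andP[? _]; apply: F0; apply/eqP; lia.
Qed.

Lemma sum_pauli_phase_word_at n o u v : (o.+2 < n)%N ->
  (\sum_(k < n) pauli_phase (word_at u o k) (word_at v o k))%N = word_phase u v.
Proof.
case: u => [[a b] c]; case: v => [[a' b'] c'] lt_on.
rewrite (@big_ord_window n o (fun k => pauli_phase (word_at _ o k) (word_at _ o k)) lt_on).
  have [ne10 ne20 ne21] : [/\ o.+1 != o, o.+2 != o & o.+2 != o.+1] by split; apply/eqP; lia.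
  by rewrite /word_at !eqxx (negbTE ne10) (negbTE ne20) (negbTE ne21).
by move=> k ne0 ne1 ne2; rewrite /word_at (negbTE ne0) (negbTE ne1) (negbTE ne2).
Qed.

Section Window.
Variables (R : realType) (n o : nat) (S : 'M[R[i]]_(2 ^ n) -> Prop).
Hypothesis lt_on : (o.+2 < n)%N.
Local Notation iPw w := ('i *: pauli_string R n (word_at w o)).

Lemma pauli_string_word_mul u v :
  pauli_string R n (word_at (word_mul u v) o) =
  pauli_string R n (fun k => pauli_mul (word_at u o k) (word_at v o k)).
Proof. by apply: eq_pauli_string => k _; rewrite word_at_mul. Qed.

Variable W : seq word.
Hypothesis LW : forall w, w \in W -> lie_closure S (iPw w).

Lemma anticommuting_products_bracket_multiple w :
  w \in anticommuting_products W -> lie_bracket_multiple S (iPw w).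
Proof.
case/mem_anticommuting_products => u [v [Wu Wv odd_uv ->]].
rewrite pauli_string_word_mul; apply: pauli_mul_bracket_multiple; try exact: LW.
by rewrite sum_pauli_phase_word_at.
Qed.

Lemma lie_closure_anticommuting_products w :
  w \in W ++ anticommuting_products W -> lie_closure S (iPw w).
Proof.
rewrite mem_cat => /orP[/LW // |].
case/mem_anticommuting_products => u [v [Wu Wv odd_uv ->]].
rewrite pauli_string_word_mul; apply: lie_closure_pauli_mul; try exact: LW.
by rewrite sum_pauli_phase_word_at.
Qed.

End Window.

Definition window_gens (G : seq (pauli * pauli)) : seq word :=
  [seq (ab.1, ab.2, PI) | ab <- G] ++ [seq (PI, ab.1, ab.2) | ab <- G].

Definition window_certificate (G : seq (pauli * pauli)) :=
  let W := window_gens G in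
  all (mem (anticommuting_products (W ++ anticommuting_products W))) W.

Lemma window_certificate_gen_set k : (1 <= k <= 22)%N -> window_certificate (gen_set k).
Proof.
move=> k_range.
have /allP : all (fun k => window_certificate (gen_set k)) (iota 1 22) by vm_compute.
by apply; rewrite mem_iota; lia.
Qed.

Lemma two_local_word_at_left a b o k : two_local a b o k = word_at (a, b, PI) o k.
Proof. by rewrite /two_local /word_at; repeat case: eqP => //; lia. Qed.

Lemma two_local_word_at_right a b o k : two_local a b o.+1 k = word_at (PI, a, b) o k.
Proof. by rewrite /two_local /word_at; repeat case: eqP => //; lia. Qed.

Lemma two_local_window a b n j : (3 <= n)%N -> (j < n.-1)%N ->
  exists2 o, (o.+2 < n)%N & exists2 w, w \in [:: (a, b, PI); (PI, a, b)] &
    forall k, two_local a b j k = word_at w o k.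
Proof.
move=> n3 lt_jn; have [lt_jn2 | ge_jn2] := ltnP j.+2 n.
  by exists j => //; exists (a, b, PI); rewrite ?inE ?eqxx // => k; apply: two_local_word_at_left.
exists j.-1; first lia.
exists (PI, a, b); first by rewrite !inE eqxx orbT.
have -> : j = j.-1.+1 by lia.
by move=> k; apply: two_local_word_at_right.
Qed.

Section TwoLocal.
Variables (R : realType) (G : seq (pauli * pauli)) (n : nat).

Definition two_local_gens (M : 'M[R[i]]_(2 ^ n)) :=
  exists2 t, (t < size G)%N & exists2 j, (j < n.-1)%N &
    M = pauli_string R n (two_local (nth (PI, PI) G t).1 (nth (PI, PI) G t).2 j).

Lemma lie_closure_window_gens o w : (o.+2 < n)%N -> w \in window_gens G ->
  lie_closure two_local_gens ('i *: pauli_string R n (word_at w o)).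
Proof.
move=> lt_on; rewrite mem_cat => /orP[] /mapP[ab Gab ->]; apply: lc_gen;
  exists (index ab G); rewrite ?index_mem // nth_index //.
- by exists o; [lia | apply: eq_pauli_string => k _; rewrite two_local_word_at_left].
- by exists o.+1; [lia | apply: eq_pauli_string => k _; rewrite two_local_word_at_right].
Qed.

Lemma two_local_gens_bracket_multiple P : (3 <= n)%N -> window_certificate G ->
  two_local_gens P -> lie_bracket_multiple two_local_gens ('i *: P).
Proof.
move=> n3 /allP cert [t /(mem_nth (PI, PI)) Gab [j lt_jn ->]].
have [o lt_on [w ab_w eq_w]] := two_local_window (nth (PI, PI) G t).1 (nth (PI, PI) G t).2 n3 lt_jn.
have Ww : w \in window_gens G.
  by move: ab_w; rewrite !inE mem_cat => /orP[] /eqP ->; rewrite map_f ?orbT.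
rewrite (eq_pauli_string R (fun k _ => eq_w k)).
apply: anticommuting_products_bracket_multiple (cert w Ww) => //.
by apply: lie_closure_anticommuting_products => // v; apply: lie_closure_window_gens.
Qed.

End TwoLocal.

Theorem mainTheorem7 (R : realType) (k n : nat) :
  (1 <= k <= 22)%N -> (3 <= n)%N ->
  forall A : 'M[R[i]]_(2 ^ n), a_lie R k n A ->
    (forall B : 'M[R[i]]_(2 ^ n), a_lie R k n B -> A *m B = B *m A) ->
    A = 0.
Proof.
move=> k_range n3 A LA cA.
apply: (lie_closure_centre_trivial _ _ LA cA).
  by move=> P [t _ [j _ ->]]; apply: pauli_string_hermitian.
move=> P; exact: two_local_gens_bracket_multiple n3 (window_certificate_gen_set k_range).
Qed.
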